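(* Let $\mathbb{F}_q$ have characteristic at least $23$, let $k/\mathbb{F}_q$ be a field, and let $v=\sum_{a\in\Phi_V}v_a\in V_k$. Suppose that $v_a=0$ for all $a\in S$ and $v_a\neq0$ for all $a\in\lambda(S)$, where $S$ is one of the following four sets of weights: $\{\tfrac12(a_1+a_2+a_3+a_4),\tfrac12(a_1-a_2+a_3+a_4),\tfrac12(a_1+a_2-a_3+a_4),\tfrac12(a_1+a_2+a_3-a_4)\}$, $\{\tfrac12(a_1+a_2+a_3+a_4),\tfrac12(-a_1+a_2+a_3+a_4),\tfrac12(a_1-a_2+a_3+a_4),\tfrac12(a_1+a_2+a_3-a_4)\}$, $\{\tfrac12(a_1+a_2+a_3+a_4),\tfrac12(-a_1+a_2+a_3+a_4),\tfrac12(a_1+a_2-a_3+a_4),\tfrac12(a_1+a_2+a_3-a_4)\}$, $\{\tfrac12(a_1+a_2+a_3+a_4),\tfrac12(-a_1+a_2+a_3+a_4),\tfrac12(a_1-a_2+a_3+a_4),\tfrac12(a_1+a_2-a_3+a_4)\}$. Then if $\Delta(v)\neq0$, $v$ belongs to a trivial orbit of $G(k)$.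
   Context: $J$ the $4\times4$ anti-diagonal matrix of $1$'s, $\Psi=\mathrm{diag}(J,J)$, $\mathrm{SO}_8$ the special orthogonal group of the form with Gram matrix $\Psi$, $H=\mathrm{SO}_8/\mu_2$, $\mathfrak{h}=\mathrm{Lie}\,H$, $\theta$ conjugation by $s=\mathrm{diag}(1,-1,-1,1,1,-1,-1,1)$, $G=(H^\theta)^\circ$, $V=\{Y\in\mathfrak{h}:sYs^{-1}=-Y\}$, $B=\mathrm{Spec}\,\mathbb{F}_q[V]^G$, $\pi:V\to B$; $\Delta$ the restriction of the discriminant of $\mathfrak{h}$. $T$ is the image of $\{\mathrm{diag}(a,b,b^{-1},a^{-1},c,d,d^{-1},c^{-1})\}$, and (additively) $a_1=ac,a_2=a/c,a_3=bd,a_4=b/d$, with dual basis $n_1,\dots,n_4$. $\Phi_V$ is the set of the $16$ weights $\frac12(\pm a_1\pm a_2\pm a_3\pm a_4)$ of $T$ on $V$ (each with one-dimensional weight space), $v_a$ the $a$-component of $v$. Partial order on $\Phi_V$: $a\geq b$ iff $n_i(a)\geq n_i(b)$ for all $i$. For $M\subset\Phi_V$, $\lambda(M)$ is the set of maximal elements of $\Phi_V-M$. Kostant section: $E_0\in\mathfrak{h}$ the matrix with entries $(1,2)=1$, $(2,5)=1$, $(3,4)=-1$, $(5,6)=1$, $(5,7)=1$, $(6,8)=-1$, $(7,8)=-1$, $(8,3)=-1$, zeros elsewhere; $\check\rho$ the image of $t\mapsto\mathrm{diag}(t^3,t^2,t^{-2},t^{-3},t,1,1,t^{-1})$; $F_0\in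 V$ unique with $\mathrm{Ad}\check\rho(t)F_0=t^{-1}F_0$, $[E_0,F_0]=d\check\rho(2)$; $\kappa=E_0+\mathfrak{z}_{\mathfrak{h}}(F_0)\subset V$ maps isomorphically to $B$, $\kappa_b$ the point over $b$. $W_0$ is the subgroup of $N_H(T)/T$ generated by $\sigma,\tau$ with $\sigma(a,b,c,d)=(a,b,c^{-1},d^{-1})$, $\tau(a,b,c,d)=(b,a,d,c)$, represented in $N_{H^\theta}(T)$. For $b\in B(k)$ with $\Delta(b)\neq0$, the trivial orbits are the $G(k)$-orbits of the elements $w\kappa_b$, $w\in W_0$ (acting through representatives in $H^\theta$). *)

From HB Require Import structures.
From mathcomp Require Import all_boot all_order all_algebra.
Set Implicit Arguments. Unset Strict Implicit. Unset Printing Implicit Defensive.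
Import Order.TTheory GRing.Theory Num.Theory.
Local Open Scope ring_scope.

Section Setup.
Variable k : fieldType.

(* 0-indexed coordinates 0..7 of k^8. *)

(* Psi = diag(J,J), J the 4x4 antidiagonal matrix of 1's. *)
Definition Psi : 'M[k]_8 :=
  \matrix_(i, j) (((i < 4)%N == (j < 4)%N) && ((i %% 4 + j %% 4)%N == 3%N))%:R.

(* sign pattern of s = diag(1,-1,-1,1,1,-1,-1,1) *)
Definition s_plus (i : nat) : bool := (i %% 4 == 0)%N || (i %% 4 == 3)%N.
Definition smat : 'M[k]_8 := \matrix_(i, j) ((i == j)%:R * (if s_plus i then 1 else -1)).

(* Lie algebra h = Lie(SO_8/mu_2) = so_8 (char k <> 2) for the form Psi. *)
Definition in_h (Y : 'M[k]_8) : bool := Y^T *m Psi + Psi *m Y == 0.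

(* V = { Y in h : s Y s^-1 = -Y }  (s^-1 = s) *)
Definition in_V (Y : 'M[k]_8) : bool := in_h Y && (smat *m Y *m smat == - Y).

(* G(k) = (H^theta)^o(k): images in PGO^+_8(k) = GO^+_8(k)/k^x of the
   similitudes g (g^T Psi g = mu Psi, mu <> 0) commuting with s and proper on
   both eigenspaces W+ = <e0,e3,e4,e7>, W- = <e1,e2,e5,e6>.
   Scalars act trivially on V, so we quantify over these g directly. *)
Definition idxP (m : 'I_4) : 'I_8 :=
  match val m with 0 => inord 0 | 1 => inord 3 | 2 => inord 4 | _ => inord 7 end.
Definition idxM (m : 'I_4) : 'I_8 :=
  match val m with 0 => inord 1 | 1 => inord 2 | 2 => inord 5 | _ => inord 6 end.
Definition blockP (g : 'M[k]_8) : 'M[k]_4 := \matrix_(i, j) g (idxP i) (idxP j).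
Definition blockM (g : 'M[k]_8) : 'M[k]_4 := \matrix_(i, j) g (idxM i) (idxM j).

Definition in_Gk (g : 'M[k]_8) : Prop :=
  exists mu : k, [/\ mu != 0, g^T *m Psi *m g = mu *: Psi, g *m smat = smat *m g,
                     \det (blockP g) = mu ^+ 2 & \det (blockM g) = mu ^+ 2].

(* T-character of the (i,j) matrix entry is eps_i - eps_j, where
   t = diag(a,b,b^-1,a^-1,c,d,d^-1,c^-1); eps2 i m = twice the coefficient of
   a_(m+1) in eps_i (a1 = ac, a2 = a/c, a3 = bd, a4 = b/d). *)
Definition eps2 (i m : nat) : int :=
  match i, m with
  | 0, 0 | 0, 1 | 1, 2 | 1, 3 | 4, 0 | 5, 2 | 6, 3 | 7, 1 => Posz 1
  | 2, 2 | 2, 3 | 3, 0 | 3, 1 | 4, 1 | 5, 3 | 6, 2 | 7, 0 => Negz 0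
  | _, _ => Posz 0
  end.
End Setup.

(* Weights in Phi_V: 1/2 (e1 a1 + e2 a2 + e3 a3 + e4 a4), e_m = +1 iff (w m). *)
Definition wt := {ffun 'I_4 -> bool}.
Definition sgnz (b : bool) : int := if b then Posz 1 else Negz 0.
Definition mkwt (b1 b2 b3 b4 : bool) : wt :=
  [ffun m : 'I_4 => nth false [:: b1; b2; b3; b4] m].

Definition entry_wt (i j : 'I_8) (a : wt) : bool :=
  [forall m : 'I_4, (eps2 i m - eps2 j m)%R == sgnz (a m)].

Definition wcomp (k : fieldType) (v : 'M[k]_8) (a : wt) : 'M[k]_8 :=
  \matrix_(i, j) (if entry_wt i j a then v i j else 0).

(* partial order: a >= b iff n_i(a) >= n_i(b) for all i *)
Definition wt_ge (a b : wt) : bool := [forall m : 'I_4, b m ==> a m].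

Definition lambda (M : {set wt}) : {set wt} :=
  [set a | (a \notin M) && [forall b, ((b \notin M) && wt_ge b a) ==> (b == a)]].

Definition S1 : {set wt} :=
  [set mkwt true true true true; mkwt true false true true;
       mkwt true true false true; mkwt true true true false].
Definition S2 : {set wt} :=
  [set mkwt true true true true; mkwt false true true true;
       mkwt true false true true; mkwt true true true false].
Definition S3 : {set wt} :=
  [set mkwt true true true true; mkwt false true true true;
       mkwt true true false true; mkwt true true true false].
Definition S4 : {set wt} :=
  [set mkwt true true true true; mkwt false true true true;
       mkwt true false true true; mkwt true true false true].

Section Setup2.
Variable k : fieldType.

(* Discriminant of h restricted to V: for Y in so_8, char_poly Y = q(x^2);
   Delta(Y) = prod_{roots} alpha(Y_ss) = (up to sign) disc(q), taken here as
   resultant(q, q') (q monic, so this is disc q up to sign). *)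
Definition qpoly (Y : 'M[k]_8) : {poly k} := \poly_(i < 5) (char_poly Y)`_(2 * i).
Definition Delta (Y : 'M[k]_8) : k := resultant (qpoly Y) (qpoly Y)^`().

Definition E0 : 'M[k]_8 :=
  \matrix_(i, j)
   (match val i, val j with
    | 0, 1 | 1, 4 | 4, 5 | 4, 6 => 1
    | 2, 3 | 5, 7 | 6, 7 | 7, 2 => -1
    | _, _ => 0 end).

(* rho-check(t) = diag(t^3,t^2,t^-2,t^-3,t,1,1,t^-1) *)
Definition rhow (i : nat) : int :=
  match i with 0 => 3 | 1 => 2 | 2 => -2 | 3 => -3 | 4 => 1 | 5 => 0 | 6 => 0 | _ => -1 end.
Definition h0 : 'M[k]_8 := \matrix_(i, j) ((i == j)%:R * ((2 * rhow i)%:~R)).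

Definition lie (X Y : 'M[k]_8) : 'M[k]_8 := X *m Y - Y *m X.

(* F0 in V with Ad rho-check(t) F0 = t^-1 F0 (i.e. only entries of rho-weight -1)
   and [E0, F0] = d rho-check(2). *)
Definition isF0 (F : 'M[k]_8) : Prop :=
  [/\ in_V F,
      (forall i j : 'I_8, rhow i - rhow j != -1 -> F i j = 0)
    & lie E0 F = h0].

Definition in_kappa (F : 'M[k]_8) (u : 'M[k]_8) : Prop :=
  exists X, [/\ in_h X, lie X F = 0 & u = E0 + X].

Definition permmx (f : nat -> nat) : 'M[k]_8 := \matrix_(i, j) (val j == f (val i))%:R.
Definition sigma_mx : 'M[k]_8 := permmx (fun i => if (i < 4)%N then i else (11 - i)%N).
Definition tau_mx : 'M[k]_8 :=
  permmx (fun i => if odd i then i.-1 else i.+1).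

(* W_0 = subgroup generated by sigma, tau (finite, so the generated monoid) *)
Inductive W0 : 'M[k]_8 -> Prop :=
  | W0_1 : W0 1%:M
  | W0_s w : W0 w -> W0 (sigma_mx *m w)
  | W0_t w : W0 w -> W0 (tau_mx *m w).

(* v lies in a trivial orbit: v = g . (w . kappa_b) with g in G(k), w in W_0;
   necessarily b = pi(v), so kappa_b is the point of kappa(k) over pi(v). *)
Definition trivial_orbit (v : 'M[k]_8) : Prop :=
  exists F, isF0 F /\
  exists u w g, [/\ in_kappa F u, W0 w, in_Gk g &
     v = g *m (w *m u *m invmx w) *m invmx g].
End Setup2.

(* The weights of V are the sixteen vectors (+-a1 +-a2 +-a3 +-a4)/2.  The Weyl
   elements sigma and tau are permutation matrices normalizing V and G; on weights
   they act by the coordinate permutations (a1 a2)(a3 a4) and (a1 a3)(a2 a4), which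
   preserve the partial order and therefore commute with lambda.  As tau carries the
   pattern S2 to S1 and sigma carries S3 to S1 and S4 to S2, only S1 remains.
   For S1, v vanishes on the four highest weights and not on lambda(S1), the four
   weights just below them.  A torus element rescales these four coordinates to 1,
   and a unipotent element n(z) of G then moves v into the Kostant section
   E0 + z_h(F0): the other eight coordinates of n(z) (E0 + X(w)) n(z)^-1 form a
   triangular polynomial system in (z, w), solvable once 2, 3 and 7 are invertible. *)

From HB Require Import structures.
From mathcomp Require Import all_boot all_order all_algebra.
From mathcomp Require Import ring.
Set Implicit Arguments. Unset Strict Implicit. Unset Printing Implicit Defensive.
Import Order.TTheory GRing.Theory Num.Theory.
Local Open Scope ring_scope.

Ltac case_ord8 i := case: i => [[|[|[|[|[|[|[|[|?]]]]]]]] ?] //.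

Lemma val_inord n m : (m < n.+1)%N -> val (@inord n m) = m.
Proof. exact: inordK. Qed.

Section EntryCalculus.
Variable k : fieldType.

(* Entries at natural-number indices: after case analysis on the indices, goals
   become closed ring expressions for [ring] and [field]. *)
Definition ent n (A : 'M[k]_n.+1) (a b : nat) : k := A (inord a) (inord b).

Lemma entE n (A : 'M[k]_n.+1) (i j : 'I_n.+1) : A i j = ent A i j.
Proof. by rewrite /ent !inord_val. Qed.

Definition psi_pair (i : nat) : nat := nth 0%N [:: 3; 2; 1; 0; 7; 6; 5; 4]%N i.

Lemma psi_pair_lt i : (psi_pair i < 8)%N.
Proof. by do 8 (case: i => [|i] //); case: i. Qed.

Lemma psi_pairK i : (i < 8)%N -> psi_pair (psi_pair i) = i.
Proof. by do 8 (case: i => [|i] //). Qed.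

Definition psi_pairI (i : 'I_8) : 'I_8 := Ordinal (psi_pair_lt i).

Lemma Psi_entry (i j : 'I_8) : Psi k i j = (j == psi_pairI i)%:R.
Proof. by rewrite mxE; case_ord8 i; case_ord8 j. Qed.

Lemma Psi_entry_sym (i j : 'I_8) : Psi k i j = (i == psi_pairI j)%:R.
Proof. by rewrite mxE; case_ord8 i; case_ord8 j. Qed.

Lemma mul_Psi_mx (A : 'M[k]_8) i j : (Psi k *m A) i j = A (psi_pairI i) j.
Proof.
rewrite mxE (bigD1 (psi_pairI i)) //= Psi_entry eqxx mul1r big1 ?addr0 // => l Hl.
by rewrite Psi_entry (negbTE Hl) mul0r.
Qed.

Lemma mul_mx_Psi (A : 'M[k]_8) i j : (A *m Psi k) i j = A i (psi_pairI j).
Proof.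
rewrite mxE (bigD1 (psi_pairI j)) //= Psi_entry_sym eqxx mulr1 big1 ?addr0 // => l Hl.
by rewrite Psi_entry_sym (negbTE Hl) mulr0.
Qed.

Definition ssign (i : nat) : k := if s_plus i then 1 else -1.

Lemma mul_smat_mx (A : 'M[k]_8) i j : (smat k *m A) i j = ssign i * A i j.
Proof.
rewrite mxE (bigD1 i) //= mxE eqxx mul1r big1 ?addr0 // => l Hl.
by rewrite mxE eq_sym (negbTE Hl) !mul0r.
Qed.

Lemma mul_mx_smat (A : 'M[k]_8) i j : (A *m smat k) i j = A i j * ssign j.
Proof.
rewrite mxE (bigD1 j) //= mxE eqxx mul1r big1 ?addr0 // => l Hl.
by rewrite mxE (negbTE Hl) mul0r mulr0.
Qed.

Lemma Psi_mulmxE (A : 'M[k]_8) : Psi k *m A = \matrix_(i, j) A (psi_pairI i) j.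
Proof. by apply/matrixP => i j; rewrite mul_Psi_mx mxE. Qed.

Lemma mulmx_PsiE (A : 'M[k]_8) : A *m Psi k = \matrix_(i, j) A i (psi_pairI j).
Proof. by apply/matrixP => i j; rewrite mul_mx_Psi mxE. Qed.

Lemma smat_mulmxE (A : 'M[k]_8) : smat k *m A = \matrix_(i, j) (ssign i * A i j).
Proof. by apply/matrixP => i j; rewrite mul_smat_mx mxE. Qed.

Lemma mulmx_smatE (A : 'M[k]_8) : A *m smat k = \matrix_(i, j) (A i j * ssign j).
Proof. by apply/matrixP => i j; rewrite mul_mx_smat mxE. Qed.

Lemma det_mx2 (A : 'M[k]_2) : \det A = ent A 0 0 * ent A 1 1 - ent A 0 1 * ent A 1 0.
Proof.
rewrite (expand_det_row A ord0) !big_ord_recr big_ord0 /= /cofactor !det_mx11 !mxE.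
by rewrite !(entE A) /=; ring.
Qed.

Lemma det_mx3 (A : 'M[k]_3) : \det A =
    ent A 0 0 * (ent A 1 1 * ent A 2 2 - ent A 1 2 * ent A 2 1)
  - ent A 0 1 * (ent A 1 0 * ent A 2 2 - ent A 1 2 * ent A 2 0)
  + ent A 0 2 * (ent A 1 0 * ent A 2 1 - ent A 1 1 * ent A 2 0).
Proof.
rewrite (expand_det_row A ord0) !big_ord_recr big_ord0 /= /cofactor !det_mx2 /ent !mxE.
by rewrite !(entE A) /= !inordK //= /bump /=; ring.
Qed.

Definition det4 (a : nat -> nat -> k) : k :=
    a 0 0 * (a 1 1 * (a 2 2 * a 3 3 - a 2 3 * a 3 2) - a 1 2 * (a 2 1 * a 3 3 - a 2 3 * a 3 1)
             + a 1 3 * (a 2 1 * a 3 2 - a 2 2 * a 3 1))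
  - a 0 1 * (a 1 0 * (a 2 2 * a 3 3 - a 2 3 * a 3 2) - a 1 2 * (a 2 0 * a 3 3 - a 2 3 * a 3 0)
             + a 1 3 * (a 2 0 * a 3 2 - a 2 2 * a 3 0))
  + a 0 2 * (a 1 0 * (a 2 1 * a 3 3 - a 2 3 * a 3 1) - a 1 1 * (a 2 0 * a 3 3 - a 2 3 * a 3 0)
             + a 1 3 * (a 2 0 * a 3 1 - a 2 1 * a 3 0))
  - a 0 3 * (a 1 0 * (a 2 1 * a 3 2 - a 2 2 * a 3 1) - a 1 1 * (a 2 0 * a 3 2 - a 2 2 * a 3 0)
             + a 1 2 * (a 2 0 * a 3 1 - a 2 1 * a 3 0)).

Lemma det_mx4 (A : 'M[k]_4) : \det A = det4 (ent A).
Proof.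
rewrite (expand_det_row A ord0) !big_ord_recr big_ord0 /= /cofactor !det_mx3 /ent !mxE.
by rewrite !(entE A) /= !inordK //= /det4 /bump /= /ent; ring.
Qed.

End EntryCalculus.

Arguments ent : simpl never.

(* Products with Psi and smat are first turned into index permutations and sign
   changes, which keeps the expanded sums small. *)
Ltac mx_entrywise :=
  let i := fresh "i" in let j := fresh "j" in
  rewrite ?mulmx_smatE ?smat_mulmxE ?mulmx_PsiE ?Psi_mulmxE;
  apply/matrixP => i j; do 4 rewrite ?mxE ?big_ord_recr ?big_ord0 /=;
  case_ord8 i; case_ord8 j; rewrite /= ?/ssign /=.

(** * Coordinates and weights on V *)

Section Coordinates.
Variable k : fieldType.

Section InV.
Variable v : 'M[k]_8.
Hypothesis hv : in_V v.

Lemma in_V_skew a b : (a < 8)%N -> (b < 8)%N ->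
  ent v a b = - ent v (psi_pair b) (psi_pair a).
Proof.
move=> Ha Hb; case/andP: hv => /eqP/matrixP/(_ (inord b) (inord (psi_pair a))) + _.
rewrite mxE mul_mx_Psi mul_Psi_mx !mxE /ent /psi_pairI /=.
have -> : Ordinal (psi_pair_lt (@inord 7 (psi_pair a))) = inord a.
  by apply: ord_inj; rewrite /= !inordK ?psi_pairK // psi_pair_lt.
have -> : Ordinal (psi_pair_lt (@inord 7 b)) = inord (psi_pair b).
  by apply: ord_inj; rewrite /= !inordK // psi_pair_lt.
by move/eqP; rewrite addr_eq0 => /eqP.
Qed.

Lemma in_V_diag_block_eq0 a b : (2 : k) != 0 -> (a < 8)%N -> (b < 8)%N ->
  s_plus a = s_plus b -> ent v a b = 0.
Proof.
move=> h2 Ha Hb Hs; case/andP: hv => _ /eqP/matrixP/(_ (inord a) (inord b)).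
rewrite mul_mx_smat mul_smat_mx mxE -/(ent v a b) /ssign !inordK // Hs.
have -> : forall x : k, (if s_plus b then 1 else -1) * x * (if s_plus b then 1 else -1) = x.
  by move=> x; case: (s_plus b); ring.
move/eqP; rewrite -addr_eq0 -mulr2n -mulr_natr mulf_eq0 => /orP [/eqP //|].
by rewrite (negbTE h2).
Qed.
End InV.

(* Coordinates on the 16-dimensional space V: coordinate q sits with sign 1 at the
   entry (vrow q, vcol q), and with sign -1 at its mirror image under Psi. *)
Definition vmx_sign : seq k :=
  [:: 0; 1; 1; 0; 0; 1; 1; 0;   1; 0; 0; -1; 1; 0; 0; 1;
      1; 0; 0; -1; 1; 0; 0; 1;  0; -1; -1; 0; 0; 1; 1; 0;
      0; -1; -1; 0; 0; 1; 1; 0; -1; 0; 0; -1; 1; 0; 0; -1;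
     -1; 0; 0; -1; 1; 0; 0; -1; 0; -1; -1; 0; 0; -1; -1; 0].
Definition vmx_coord : seq nat :=
  [:: 0; 4; 0; 0; 0; 1; 2; 0;    8; 0; 0; 0; 5; 0; 0; 3;
     15; 0; 0; 4; 12; 0; 0; 9;   0; 15; 8; 0; 0; 13; 14; 0;
      0; 9; 3; 0; 0; 6; 7; 0;   14; 0; 0; 2; 10; 0; 0; 7;
     13; 0; 0; 1; 11; 0; 0; 6;   0; 12; 5; 0; 0; 11; 10; 0]%N.
Definition vrow : seq nat := [:: 0; 0; 0; 1; 0; 1; 4; 4; 1; 2; 5; 6; 2; 3; 3; 2]%N.
Definition vcol : seq nat := [:: 2; 5; 6; 7; 1; 4; 5; 6; 0; 7; 4; 4; 4; 5; 6; 0]%N.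

Definition vmx (x : nat -> k) : 'M[k]_8 :=
  \matrix_(i, j) (nth 0 vmx_sign (8 * i + j) * x (nth 0%N vmx_coord (8 * i + j))).

Definition vcoord (v : 'M[k]_8) (q : nat) : k := ent v (nth 0%N vrow q) (nth 0%N vcol q).

Lemma vmx_vcoord v : (2 : k) != 0 -> in_V v -> v = vmx (vcoord v).
Proof.
move=> h2 hv; apply/matrixP => i j; rewrite mxE (entE v) /vcoord.
case_ord8 i; case_ord8 j; rewrite /=;
  first [ by rewrite mul1r | by rewrite mul0r (in_V_diag_block_eq0 hv h2)
        | by rewrite [LHS](in_V_skew hv) // /= mulN1r ].
Qed.

Lemma vmx_coord_lt n : (nth 0%N vmx_coord n < 16)%N.
Proof.
case: (ltnP n (size vmx_coord)) => [Hn|Hn]; last by rewrite nth_default.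
by apply: (allP (_ : all (fun q => q < 16)%N vmx_coord)) => //; apply: mem_nth.
Qed.

Lemma eq_vmx (x y : nat -> k) : (forall q, (q < 16)%N -> x q = y q) -> vmx x = vmx y.
Proof. by move=> Exy; apply/matrixP => i j; rewrite !mxE Exy // vmx_coord_lt. Qed.

End Coordinates.

Definition ord4 (n : nat) : 'I_4 := inord n.

Lemma mkwt_eq a0 a1 a2 a3 b0 b1 b2 b3 :
  (mkwt a0 a1 a2 a3 == mkwt b0 b1 b2 b3) = [&& a0 == b0, a1 == b1, a2 == b2 & a3 == b3].
Proof.
apply/idP/idP => [/eqP/ffunP E | /and4P [/eqP-> /eqP-> /eqP-> /eqP->] //].
have := E (ord4 0); have := E (ord4 1); have := E (ord4 2); have := E (ord4 3).
by rewrite !ffunE /ord4 !val_inord //= => -> -> -> ->; rewrite !eqxx.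
Qed.

Lemma wt_eta (a : wt) : a = mkwt (a (ord4 0)) (a (ord4 1)) (a (ord4 2)) (a (ord4 3)).
Proof.
apply/ffunP => m; rewrite ffunE; case: m => [[|[|[|[|m]]]] Hm] //=;
  by congr (a _); apply: ord_inj; rewrite /ord4 /= val_inord.
Qed.

Lemma wt_ge_mkwt a0 a1 a2 a3 b0 b1 b2 b3 :
  wt_ge (mkwt a0 a1 a2 a3) (mkwt b0 b1 b2 b3) =
  [&& b0 ==> a0, b1 ==> a1, b2 ==> a2 & b3 ==> a3].
Proof.
apply/forallP/and4P => [H | [H0 H1 H2 H3] m].
- have := H (ord4 0); have := H (ord4 1); have := H (ord4 2); have := H (ord4 3).
  by rewrite !ffunE /ord4 !val_inord.
- by rewrite !ffunE; case: m => [[|[|[|[|m]]]] Hm].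
Qed.

Ltac lambda_mem :=
  rewrite inE; apply/andP; split;
  [ by rewrite !inE !mkwt_eq
  | apply/forallP; let b := fresh "b" in move=> b; rewrite [b]wt_eta;
    case: (b (ord4 0)); case: (b (ord4 1)); case: (b (ord4 2)); case: (b (ord4 3));
    by rewrite !inE !mkwt_eq wt_ge_mkwt ].

(* [coord_wt q] is the weight of the coordinate q of [vmx]; [wt_coord] is its
   inverse, read off the binary encoding of the signs of the weight. *)
Definition coord_wts : seq wt :=
  [:: mkwt true true true true;    mkwt true true false true;
      mkwt true true true false;   mkwt true false true true;
      mkwt true true false false;  mkwt false true true true;
      mkwt true false false true;  mkwt true false true false;
      mkwt false false true true;  mkwt true false false false;
      mkwt false true true false;  mkwt false true false true;
      mkwt false true false false; mkwt false false false true;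
      mkwt false false true false; mkwt false false false false].
Definition coord_wt (q : nat) : wt := nth (mkwt false false false false) coord_wts q.

Definition wt_coord (a : wt) : nat :=
  nth 0%N [:: 15; 13; 14; 8; 12; 11; 10; 5; 9; 6; 7; 3; 4; 1; 2; 0]%N
    (8 * a (ord4 0) + 4 * a (ord4 1) + 2 * a (ord4 2) + a (ord4 3)).

Lemma coord_wtK q : (q < 16)%N -> wt_coord (coord_wt q) = q.
Proof.
by case: q => [|[|[|[|[|[|[|[|[|[|[|[|[|[|[|[|q]]]]]]]]]]]]]]]] // _;
  rewrite /wt_coord /coord_wt /= /ord4 !ffunE /= !val_inord.
Qed.

Definition entry_weight (i j : nat) : wt := [ffun m : 'I_4 => (eps2 i m - eps2 j m == 1)%R].

Lemma entry_wtP (i j : 'I_8) a : entry_wt i j a -> a = entry_weight i j.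
Proof.
move/forallP => H; apply/ffunP => m; rewrite ffunE; move/eqP: (H m) => ->.
by case: (a m).
Qed.

Section Weights.
Variable k : fieldType.

Lemma wt_coord_entry (i j : 'I_8) : nth 0 (vmx_sign k) (8 * i + j) != 0 ->
  wt_coord (entry_weight i j) = nth 0%N vmx_coord (8 * i + j).
Proof.
by case_ord8 i; case_ord8 j; rewrite /= ?eqxx // /wt_coord /ord4 !ffunE !val_inord.
Qed.

Lemma entry_wt_vcoord q : (q < 16)%N ->
  entry_wt (inord (nth 0%N vrow q)) (inord (nth 0%N vcol q)) (coord_wt q).
Proof.
case: q => [|[|[|[|[|[|[|[|[|[|[|[|[|[|[|[|q]]]]]]]]]]]]]]]] // _;
  apply/forallP => m; rewrite /coord_wt /= ffunE;
  by case: m => [[|[|[|[|?]]]] Hm] //=; rewrite ?val_inord.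
Qed.

Lemma vcoord_eq0 (v : 'M[k]_8) q : (q < 16)%N ->
  wcomp v (coord_wt q) = 0 -> vcoord v q = 0.
Proof.
by move=> Hq /matrixP/(_ (inord (nth 0%N vrow q)) (inord (nth 0%N vcol q)));
  rewrite !mxE entry_wt_vcoord.
Qed.

Lemma wcomp_vmx_eq0 (x : nat -> k) q : (q < 16)%N -> x q = 0 -> wcomp (vmx x) (coord_wt q) = 0.
Proof.
move=> Hq Hx; apply/matrixP => i j; rewrite !mxE; case: ifP => // /entry_wtP Ea.
have [->|Hs] := eqVneq (nth 0 (vmx_sign k) (8 * i + j)) 0; first by rewrite mul0r.
by rewrite -(wt_coord_entry Hs) -Ea coord_wtK // Hx mulr0.
Qed.

End Weights.

(** * The group G and the Kostant section *)

Section GroupG.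
Variable k : fieldType.

Lemma offdiag_block_eq0 (g : 'M[k]_8) : (2 : k) != 0 -> g *m smat k = smat k *m g ->
  forall i j : 'I_8, s_plus i != s_plus j -> g i j = 0.
Proof.
move=> h2 /matrixP Hg i j Hij; have := Hg i j; rewrite mul_mx_smat mul_smat_mx /ssign.
case: (s_plus i) Hij; case: (s_plus j) => // _ /eqP.
- rewrite mulrN1 mul1r eq_sym -addr_eq0 -mulr2n -mulr_natr mulf_eq0.
  by rewrite (negbTE h2) orbF => /eqP.
- rewrite mulr1 mulN1r -addr_eq0 -mulr2n -mulr_natr mulf_eq0.
  by rewrite (negbTE h2) orbF => /eqP.
Qed.

Lemma sum_ord8_blocks (F : 'I_8 -> k) :
  \sum_(l < 8) F l = \sum_(r < 4) F (idxP r) + \sum_(r < 4) F (idxM r).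
Proof.
pose G n := F (inord n).
have FE l : F l = G (val l) by rewrite /G inord_val.
rewrite !big_ord_recr !big_ord0 /= !FE /idxP /idxM /= !inordK // /G; ring.
Qed.

Lemma idxP_plus (a : 'I_4) : s_plus (idxP a).
Proof. by case: a => [[|[|[|[|a]]]] Ha] //; rewrite /idxP /= val_inord. Qed.

Lemma idxM_minus (a : 'I_4) : s_plus (idxM a) = false.
Proof. by case: a => [[|[|[|[|a]]]] Ha] //; rewrite /idxM /= val_inord. Qed.

Section BlockMultiplicative.
Variables A B : 'M[k]_8.
Hypotheses (h2 : (2 : k) != 0) (hA : A *m smat k = smat k *m A).

Lemma blockP_mul : blockP (A *m B) = blockP A *m blockP B.
Proof.
apply/matrixP => a b; rewrite [LHS]mxE [LHS]mxE sum_ord8_blocks.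
rewrite [X in _ + X]big1 ?addr0 => [|r _]; first by rewrite mxE; apply: eq_bigr => r _; rewrite !mxE.
by rewrite (offdiag_block_eq0 h2 hA) ?mul0r // idxP_plus idxM_minus.
Qed.

Lemma blockM_mul : blockM (A *m B) = blockM A *m blockM B.
Proof.
apply/matrixP => a b; rewrite [LHS]mxE [LHS]mxE sum_ord8_blocks.
rewrite [X in X + _]big1 ?add0r => [|r _]; first by rewrite mxE; apply: eq_bigr => r _; rewrite !mxE.
by rewrite (offdiag_block_eq0 h2 hA) ?mul0r // idxP_plus idxM_minus.
Qed.
End BlockMultiplicative.

Lemma in_Gk_mul (A B : 'M[k]_8) : (2 : k) != 0 -> in_Gk A -> in_Gk B -> in_Gk (A *m B).
Proof.
move=> h2 [m1 [Hm1 HA1 HA2 HA3 HA4]] [m2 [Hm2 HB1 HB2 HB3 HB4]].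
exists (m1 * m2); split; first by rewrite mulf_neq0.
- rewrite trmx_mul -!mulmxA (mulmxA A^T) (mulmxA (A^T *m _)) HA1.
  by rewrite -scalemxAl -scalemxAr !mulmxA HB1 scalerA.
- by rewrite -mulmxA HB2 !mulmxA HA2.
- by rewrite blockP_mul // det_mulmx HA3 HB3 exprMn.
- by rewrite blockM_mul // det_mulmx HA4 HB4 exprMn.
Qed.

Lemma Psi_invol : Psi k *m Psi k = 1%:M.
Proof. by apply/matrixP => i j; rewrite mul_Psi_mx !mxE; case_ord8 i; case_ord8 j. Qed.

Lemma in_Gk_unit (g : 'M[k]_8) : in_Gk g -> g \in unitmx.
Proof.
case=> m [Hm Hg _ _ _].
have Hinv : (m^-1 *: (Psi k *m g^T)) *m (Psi k *m g) = 1%:M.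
  rewrite -scalemxAl mulmxA -(mulmxA _ _ (Psi k)) -mulmxA -(mulmxA g^T) mulmxA Hg.
  by rewrite -scalemxAr Psi_invol scalerA mulVf // scale1r.
by have [_] := mulmx1_unit Hinv; rewrite unitmx_mul => /andP [].
Qed.

Lemma blockP_ent (g : 'M[k]_8) a b : (a < 4)%N -> (b < 4)%N ->
  ent (blockP g) a b = ent g (nth 0%N [:: 0; 3; 4; 7] a) (nth 0%N [:: 0; 3; 4; 7] b).
Proof.
move=> Ha Hb; rewrite /ent mxE /idxP !val_inord //.
by case: a Ha => [|[|[|[|a]]]] Ha //; case: b Hb => [|[|[|[|b]]]] Hb.
Qed.

Lemma blockM_ent (g : 'M[k]_8) a b : (a < 4)%N -> (b < 4)%N ->
  ent (blockM g) a b = ent g (nth 0%N [:: 1; 2; 5; 6] a) (nth 0%N [:: 1; 2; 5; 6] b).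
Proof.
move=> Ha Hb; rewrite /ent mxE /idxM !val_inord //.
by case: a Ha => [|[|[|[|a]]]] Ha //; case: b Hb => [|[|[|[|b]]]] Hb.
Qed.
End GroupG.

Section Torus.
Variable k : fieldType.

Definition torus_diag (t0 t1 t4 t5 mu : k) : seq k :=
  [:: t0; t1; mu / t1; mu / t0; t4; t5; mu / t5; mu / t4].

Definition torus (t0 t1 t4 t5 mu : k) : 'M[k]_8 :=
  \matrix_(i, j) ((i == j)%:R * nth 0 (torus_diag t0 t1 t4 t5 mu) i).

Lemma ent_torus t0 t1 t4 t5 mu a b : (a < 8)%N -> (b < 8)%N ->
  ent (torus t0 t1 t4 t5 mu) a b = (a == b)%:R * nth 0 (torus_diag t0 t1 t4 t5 mu) a.
Proof. by move=> Ha Hb; rewrite /ent mxE -val_eqE /= !val_inord. Qed.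

Lemma torus_in_Gk (t0 t1 t4 t5 mu : k) :
  t0 != 0 -> t1 != 0 -> t4 != 0 -> t5 != 0 -> mu != 0 -> in_Gk (torus t0 t1 t4 t5 mu).
Proof.
move=> H0 H1 H4 H5 Hm; exists mu; split => //.
- by mx_entrywise; field; rewrite ?H0 ?H1 ?H4 ?H5.
- by mx_entrywise; ring.
- rewrite det_mx4 /det4 !blockP_ent // /= !ent_torus //=.
  by field; rewrite ?H0 ?H4.
- rewrite det_mx4 /det4 !blockM_ent // /= !ent_torus //=.
  by field; rewrite ?H1 ?H5.
Qed.
End Torus.

Section Kostant.
Variable k : fieldType.

Definition mx_of_seq (L : seq k) : 'M[k]_8 := \matrix_(i, j) nth 0 L (8 * i + j).

Lemma ent_mx_of_seq (L : seq k) a b : (a < 8)%N -> (b < 8)%N ->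
  ent (mx_of_seq L) a b = nth 0 L (8 * a + b).
Proof. by move=> Ha Hb; rewrite /ent mxE !inordK. Qed.

Definition unipotent (z0 z1 z2 z3 : k) : 'M[k]_8 := mx_of_seq
  [:: 1;            0;            0; 0; 0;  0;  0;  0;
      0;            1;            0; 0; 0;  0;  0;  0;
      0;            - (z0 * z1);  1; 0; 0;  z0; z1; 0;
      - (z2 * z3);  0;            0; 1; z3; 0;  0;  z2;
      - z2;         0;            0; 0; 1;  0;  0;  0;
      0;            - z1;         0; 0; 0;  1;  0;  0;
      0;            - z0;         0; 0; 0;  0;  1;  0;
      - z3;         0;            0; 0; 0;  0;  0;  1].

Lemma unipotent_in_Gk (z0 z1 z2 z3 : k) : in_Gk (unipotent z0 z1 z2 z3).
Proof.
exists 1; split; first exact: oner_neq0.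
- by mx_entrywise; ring.
- by mx_entrywise; ring.
- by rewrite det_mx4 /det4 !blockP_ent // /= !ent_mx_of_seq //=; ring.
- by rewrite det_mx4 /det4 !blockM_ent // /= !ent_mx_of_seq //=; ring.
Qed.

Definition F0mx : 'M[k]_8 := mx_of_seq
  [:: 0; 0;  0;  0; 0;  0;  0;  0;
      6; 0;  0;  0; 0;  0;  0;  0;
      0; 0;  0;  0; 0;  0;  0;  -10;
      0; 0;  -6; 0; 0;  0;  0;  0;
      0; 10; 0;  0; 0;  0;  0;  0;
      0; 0;  0;  0; 6;  0;  0;  0;
      0; 0;  0;  0; 6;  0;  0;  0;
      0; 0;  0;  0; 0;  -6; -6; 0].

Lemma F0mx_isF0 : isF0 F0mx.
Proof.
split.
- by apply/andP; split; apply/eqP; mx_entrywise; ring.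
- by move=> i j; rewrite mxE; case_ord8 i; case_ord8 j.
- by rewrite /lie; mx_entrywise; ring.
Qed.

(* A parametrization of the centralizer of F0 in h, which is 4-dimensional. *)
Definition centralizer_F0 (w0 w1 w2 w3 : k) : 'M[k]_8 := mx_of_seq
  [:: 0;      0;            0;        0; 0;             0;        0;        0;
      3 * w3; 0;            0;        0; 0;             0;        0;        0;
      w0;     0;            0;        0; - w1 - w2;     0;        0;        - (5 * w3);
      0;      - w0;         - (3 * w3); 0; 0;           w1;       w2;       0;
      0;      5 * w3;       0;        0; 0;             0;        0;        0;
      - w2;   0;            0;        0; 3 * w3;        0;        0;        0;
      - w1;   0;            0;        0; 3 * w3;        0;        0;        0;
      0;      w1 + w2;      0;        0; 0;             - (3 * w3); - (3 * w3); 0].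

Lemma kappa_centralizer_F0 (w0 w1 w2 w3 : k) :
  in_kappa F0mx (E0 k + centralizer_F0 w0 w1 w2 w3).
Proof.
exists (centralizer_F0 w0 w1 w2 w3); split => //.
- by apply/eqP; mx_entrywise; ring.
- by rewrite /lie; mx_entrywise; ring.
Qed.

(* The coordinates of unipotent z * (E0 + centralizer_F0 w) * (unipotent z)^-1:
   those of the four highest weights vanish and the next four equal 1. *)
Definition kostant_coord (z0 z1 z2 z3 w0 w1 w2 w3 : k) (q : nat) : k := nth 0
  [:: 0; 0; 0; 0; 1; 1; 1; 1;
      3 * w3 + z2;
      - (5 * w3) - z0 - z1 + z2;
      3 * w3 - z1;
      3 * w3 - z0;
      - w1 - w2 + 3 * w3 * z0 + 3 * w3 * z1 - z0 * z1 + z3;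
      w1 + 3 * w3 * z0 - 3 * w3 * z2 + z0 * z2 + z3;
      w2 + 3 * w3 * z1 - 3 * w3 * z2 + z1 * z2 + z3;
      w0 - w1 * z1 - w1 * z2 - w2 * z0 - w2 * z2 - 3 * w3 * z0 * z1
        + 3 * w3 * z0 * z2 + 3 * w3 * z1 * z2 - 5 * w3 * z3 - z0 * z1 * z2
        - z0 * z3 - z1 * z3 + z2 * z3] q.

Lemma vmx_kostant_coord (z0 z1 z2 z3 w0 w1 w2 w3 : k) :
  vmx (kostant_coord z0 z1 z2 z3 w0 w1 w2 w3) *m unipotent z0 z1 z2 z3 =
  unipotent z0 z1 z2 z3 *m (E0 k + centralizer_F0 w0 w1 w2 w3).
Proof. by mx_entrywise; rewrite /kostant_coord /=; ring. Qed.

(* The system is triangular: w3 is read off from the coordinates 8..11 (this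
   needs 14 != 0), then z0, z1, z2, then z3 (this needs 3 != 0), then w1, w2, w0. *)
Lemma kostant_coord_onto (y : nat -> k) : (14 : k) != 0 -> (3 : k) != 0 ->
  exists z0 z1 z2 z3 w0 w1 w2 w3 : k,
    forall i, (i < 8)%N -> kostant_coord z0 z1 z2 z3 w0 w1 w2 w3 (8 + i) = y i.
Proof.
move=> h14 h3.
pose w3 := (y 0%N + y 2%N + y 3%N - y 1%N) / 14.
pose z0 := 3 * w3 - y 3%N; pose z1 := 3 * w3 - y 2%N; pose z2 := y 0%N - 3 * w3.
pose c4 := 3 * w3 * z0 + 3 * w3 * z1 - z0 * z1.
pose c5 := 3 * w3 * z0 - 3 * w3 * z2 + z0 * z2.
pose c6 := 3 * w3 * z1 - 3 * w3 * z2 + z1 * z2.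
pose z3 := (y 4%N + y 5%N + y 6%N - c4 - c5 - c6) / 3.
pose w1 := y 5%N - c5 - z3; pose w2 := y 6%N - c6 - z3.
pose w0 := y 7%N - (- w1 * z1 - w1 * z2 - w2 * z0 - w2 * z2 - 3 * w3 * z0 * z1
   + 3 * w3 * z0 * z2 + 3 * w3 * z1 * z2 - 5 * w3 * z3 - z0 * z1 * z2 - z0 * z3
   - z1 * z3 + z2 * z3).
exists z0, z1, z2, z3, w0, w1, w2, w3 => i.
case: i => [|[|[|[|[|[|[|[|i]]]]]]]] // _; rewrite /kostant_coord /=;
  rewrite /w0 /w1 /w2 /z3 /c4 /c5 /c6 /z0 /z1 /z2 /w3; field; by rewrite ?h14 ?h3.
Qed.

Lemma vmx_torus (x : nat -> k) (t0 t1 t4 t5 mu : k) :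
  t0 != 0 -> t1 != 0 -> t4 != 0 -> t5 != 0 -> mu != 0 ->
  let t := nth 0 (torus_diag t0 t1 t4 t5 mu) in
  vmx x *m torus t0 t1 t4 t5 mu =
  torus t0 t1 t4 t5 mu *m vmx (fun q => x q * t (nth 0%N vcol q) / t (nth 0%N vrow q)).
Proof. by move=> H0 H1 H4 H5 Hm; mx_entrywise; field; rewrite ?H0 ?H1 ?H4 ?H5 ?Hm. Qed.

End Kostant.

Section NormalForm.
Variable k : fieldType.
Hypotheses (h2 : (2 : k) != 0) (h3 : (3 : k) != 0) (h7 : (7 : k) != 0).

(* The torus rescales coordinates 4..7 to 1; the unipotent element built from
   [kostant_coord_onto] then moves the result into the Kostant section. *)
Lemma vmx_conj_kappa (x : nat -> k) :
  (forall q, (q < 4)%N -> x q = 0) -> (forall q, (4 <= q < 8)%N -> x q != 0) ->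
  exists g u, [/\ in_Gk g, in_kappa (F0mx k) u & vmx x *m g = g *m u].
Proof.
move=> Hz Hnz.
have [X4 X5 X6 X7] : [/\ x 4%N != 0, x 5%N != 0, x 6%N != 0 & x 7%N != 0] by split; apply: Hnz.
pose t0 : k := 1; pose t1 := (x 4%N)^-1; pose t4 := t1 / x 5%N; pose t5 := t4 / x 6%N.
pose mu := t4 * t5 / x 7%N.
have N0 : t0 != 0 by rewrite oner_neq0.
have N1 : t1 != 0 by rewrite invr_neq0.
have N4 : t4 != 0 by rewrite mulf_neq0 ?invr_neq0.
have N5 : t5 != 0 by rewrite mulf_neq0 ?invr_neq0.
have Nm : mu != 0 by rewrite !mulf_neq0 ?invr_neq0.
pose t := nth 0 (torus_diag t0 t1 t4 t5 mu).
pose x' q := x q * t (nth 0%N vcol q) / t (nth 0%N vrow q).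
have h14 : (14 : k) != 0 by rewrite (_ : 14 = 2 * 7) ?mulf_neq0 // -natrM.
have [z0 [z1 [z2 [z3 [w0 [w1 [w2 [w3 Hkc]]]]]]]] :=
  kostant_coord_onto (fun i => x' (8 + i)%N) h14 h3.
have Ex' : vmx x' = vmx (kostant_coord z0 z1 z2 z3 w0 w1 w2 w3).
  apply: eq_vmx => q; case: q => [|[|[|[|[|[|[|[|q]]]]]]]] Hq.
  1-4: by rewrite /x' Hz ?mul0r.
  1-4: by rewrite /x' /t /kostant_coord /= /mu /t5 /t4 /t1 /t0; field;
         rewrite ?X4 ?X5 ?X6 ?X7 ?oner_neq0.
  exact: esym (Hkc q Hq).
exists (torus t0 t1 t4 t5 mu *m unipotent z0 z1 z2 z3).
exists (E0 k + centralizer_F0 w0 w1 w2 w3); split.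
- by apply: in_Gk_mul => //; [exact: torus_in_Gk | exact: unipotent_in_Gk].
- exact: kappa_centralizer_F0.
- by rewrite mulmxA vmx_torus // -/x' -mulmxA Ex' vmx_kostant_coord mulmxA.
Qed.
End NormalForm.

(** * The Weyl elements sigma and tau *)

Section PermutationMatrix.
Variable k : fieldType.
Variable f : nat -> nat.
Hypothesis f_lt : forall i, (i < 8)%N -> (f i < 8)%N.
Hypothesis fK : forall i, (i < 8)%N -> f (f i) = i.

Local Notation P := (permmx k f).

Lemma invol_idx_eq a b : (a < 8)%N -> (b < 8)%N -> (f a == f b) = (a == b).
Proof. by move=> Ha Hb; apply/eqP/eqP => [E|->] //; rewrite -(fK Ha) E fK. Qed.

Lemma invol_inord_eq (i j : 'I_8) : (inord (f i) == inord (f j) :> 'I_8) = (i == j).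
Proof. by rewrite -val_eqE /= !val_inord ?f_lt // invol_idx_eq. Qed.

Lemma permmx_tr : P^T = P.
Proof.
apply/matrixP => i j; rewrite !mxE; congr (_%:R); congr nat_of_bool.
by apply/idP/idP => /eqP E; apply/eqP; rewrite E fK ?ltn_ord.
Qed.

Lemma permmx_mul (A : 'M[k]_8) i j : (P *m A) i j = A (inord (f i)) j.
Proof.
rewrite mxE (bigD1 (inord (f i))) //= mxE val_inord ?f_lt // eqxx mul1r.
rewrite big1 ?addr0 // => l Hl; rewrite mxE; case: eqP => [E|]; last by rewrite mul0r.
by move: Hl; rewrite -E inord_val eqxx.
Qed.

Lemma mul_permmx (A : 'M[k]_8) i j : (A *m P) i j = A i (inord (f j)).
Proof. by rewrite -[A *m P]trmxK trmx_mul permmx_tr mxE permmx_mul mxE. Qed.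

Lemma permmx_conj (A : 'M[k]_8) i j : (P *m A *m P) i j = A (inord (f i)) (inord (f j)).
Proof. by rewrite mul_permmx permmx_mul. Qed.

Lemma permmx_invol : P *m P = 1%:M.
Proof.
by apply/matrixP => i j; rewrite permmx_mul !mxE val_inord ?fK ?f_lt // eq_sym.
Qed.
End PermutationMatrix.

Definition sigma_idx (i : nat) : nat := if (i < 4)%N then i else (11 - i)%N.
Definition tau_idx (i : nat) : nat := if odd i then i.-1 else i.+1.

Lemma sigma_idx_lt i : (i < 8)%N -> (sigma_idx i < 8)%N.
Proof. by do 8 (case: i => [|i] //). Qed.
Lemma sigma_idxK i : (i < 8)%N -> sigma_idx (sigma_idx i) = i.
Proof. by do 8 (case: i => [|i] //). Qed.
Lemma tau_idx_lt i : (i < 8)%N -> (tau_idx i < 8)%N.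
Proof. by do 8 (case: i => [|i] //). Qed.
Lemma tau_idxK i : (i < 8)%N -> tau_idx (tau_idx i) = i.
Proof. by do 8 (case: i => [|i] //). Qed.

Section WeylGroup.
Variable k : fieldType.

Lemma W0_mul (w1 w2 : 'M[k]_8) : W0 w1 -> W0 w2 -> W0 (w1 *m w2).
Proof.
elim=> [|w _ IH|w _ IH] W2; first by rewrite mul1mx.
- by rewrite -mulmxA; apply: W0_s; apply: IH.
- by rewrite -mulmxA; apply: W0_t; apply: IH.
Qed.

Lemma W0_unit (w : 'M[k]_8) : W0 w -> w \in unitmx.
Proof.
have sigma_unit : sigma_mx k \in unitmx.
  by case: (mulmx1_unit (permmx_invol k sigma_idx_lt sigma_idxK)).
have tau_unit : tau_mx k \in unitmx.
  by case: (mulmx1_unit (permmx_invol k tau_idx_lt tau_idxK)).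
by elim=> [|w' _ IH|w' _ IH]; rewrite ?unitmx1 // unitmx_mul ?sigma_unit ?tau_unit.
Qed.

Lemma trivial_orbitP (v : 'M[k]_8) : trivial_orbit v <->
  exists F u w g, [/\ isF0 F, in_kappa F u, W0 w, in_Gk g & v *m (g *m w) = g *m w *m u].
Proof.
split=> [[F [HF [u [w [g [Hu Hw Hg ->]]]]]] | [F [u [w [g [HF Hu Hw Hg Hv]]]]]].
  exists F, u, w, g; split => //.
  by rewrite mulmxA mulmxKV ?in_Gk_unit // -mulmxA mulmxKV ?W0_unit // mulmxA.
exists F; split => //; exists u, w, g; split => //.
have Ug := in_Gk_unit Hg; have Uw := W0_unit Hw.
by rewrite !mulmxA -Hv mulmxA !mulmxK.
Qed.
End WeylGroup.

Definition wt_perm (pi : 'I_4 -> 'I_4) (a : wt) : wt := [ffun m => a (pi m)].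

Lemma wt_perm_invol pi : involutive pi -> involutive (wt_perm pi).
Proof. by move=> piK a; apply/ffunP => m; rewrite !ffunE piK. Qed.

Lemma wt_ge_perm pi : involutive pi -> {mono wt_perm pi : a b / wt_ge a b}.
Proof.
move=> piK a b; apply/forallP/forallP => H m; last by rewrite !ffunE; apply: H.
by have := H (pi m); rewrite !ffunE piK.
Qed.

Lemma lambda_preim (phi : wt -> wt) (S : {set wt}) :
  involutive phi -> {mono phi : a b / wt_ge a b} ->
  lambda [set a | phi a \in S] = [set a | phi a \in lambda S].
Proof.
move=> phiK phi_ge; apply/setP => a; rewrite !inE; congr (_ && _).
apply/forallP/forallP => H b.
- have := H (phi b); rewrite inE phiK -[wt_ge (phi b) a]phi_ge phiK.
  by rewrite (inv_eq phiK).
- by have := H (phi b); rewrite inE phi_ge (inj_eq (can_inj phiK)).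
Qed.

Definition weight_pattern (k : fieldType) (S : {set wt}) (v : 'M[k]_8) : Prop :=
  (forall a, a \in S -> wcomp v a = 0) /\ (forall a, a \in lambda S -> wcomp v a != 0).

Definition trivial_on_pattern (k : fieldType) (S : {set wt}) : Prop :=
  forall v : 'M[k]_8, in_V v -> weight_pattern S v -> trivial_orbit v.

Section WeylReflection.
Variable k : fieldType.
Variables (f : nat -> nat) (swap : bool) (pi : 'I_4 -> 'I_4).
Hypothesis f_lt : forall i, (i < 8)%N -> (f i < 8)%N.
Hypothesis fK : forall i, (i < 8)%N -> f (f i) = i.
Hypothesis f_psi : forall i, (i < 8)%N -> f (psi_pair i) = psi_pair (f i).
Hypothesis f_s : forall i, (i < 8)%N -> s_plus (f i) = swap (+) s_plus i.
Hypothesis piK : involutive pi.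
Hypothesis f_eps2 : forall i (m : 'I_4), (i < 8)%N -> eps2 (f i) m = eps2 i (pi m).

Local Notation P := (permmx k f).
Let eps : k := if swap then -1 else 1.

Hypothesis W0_P : W0 P.
Hypothesis det_blockP_conj : forall g,
  \det (blockP (P *m g *m P)) = \det (if swap then blockM g else blockP g).
Hypothesis det_blockM_conj : forall g,
  \det (blockM (P *m g *m P)) = \det (if swap then blockP g else blockM g).

Lemma permmx_Psi : P *m Psi k *m P = Psi k.
Proof.
apply/matrixP => i j; rewrite (permmx_conj f_lt fK) !Psi_entry -!val_eqE /= !val_inord ?f_lt //.
by rewrite -f_psi // (invol_idx_eq fK) // psi_pair_lt.
Qed.

Lemma permmx_smat : P *m smat k *m P = eps *: smat k.
Proof.
apply/matrixP => i j; rewrite (permmx_conj f_lt fK) !mxE (invol_inord_eq f_lt fK) val_inord ?f_s ?f_lt //.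
by rewrite /eps; case: swap; case: (s_plus i); case: (i == j); rewrite /=; ring.
Qed.

Lemma conj_mulmx (A B : 'M[k]_8) : P *m A *m P *m (P *m B *m P) = P *m (A *m B) *m P.
Proof.
by rewrite -!mulmxA (mulmxA P P) (permmx_invol k f_lt fK) mul1mx // mulmxA.
Qed.

Lemma conjK (A : 'M[k]_8) : P *m (P *m A *m P) *m P = A.
Proof.
by rewrite -!mulmxA (permmx_invol k f_lt fK) mulmx1 mulmxA (permmx_invol k f_lt fK) mul1mx.
Qed.

Lemma conj_trmx (A : 'M[k]_8) : (P *m A *m P)^T = P *m A^T *m P.
Proof. by rewrite !trmx_mul (permmx_tr k fK) mulmxA. Qed.

Lemma smat_conj : smat k = eps *: (P *m smat k *m P).
Proof. by rewrite permmx_smat scalerA /eps; case: swap; rewrite ?mulrNN mulr1 scale1r. Qed.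

Lemma in_V_conj (v : 'M[k]_8) : in_V v -> in_V (P *m v *m P).
Proof.
case/andP => /eqP Hh /eqP Hs; apply/andP; split; apply/eqP.
  by rewrite conj_trmx -permmx_Psi !conj_mulmx -mulmxDl -mulmxDr Hh mulmx0 mul0mx.
rewrite smat_conj -!scalemxAl -!scalemxAr !conj_mulmx scalerA.
by rewrite /eps; case: swap; rewrite ?mulrNN mulr1 scale1r Hs mulmxN mulNmx.
Qed.

Lemma in_Gk_conj (g : 'M[k]_8) : in_Gk g -> in_Gk (P *m g *m P).
Proof.
case=> mu [Hmu Hg Hs HdP HdM]; exists mu; split => //.
- by rewrite conj_trmx -permmx_Psi !conj_mulmx Hg -scalemxAr -scalemxAl.
- by rewrite smat_conj -!scalemxAl -!scalemxAr !conj_mulmx Hs.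
- by rewrite det_blockP_conj; case: swap.
- by rewrite det_blockM_conj; case: swap.
Qed.

Lemma entry_wt_conj (i j : 'I_8) a :
  entry_wt (inord (f i)) (inord (f j)) (wt_perm pi a) = entry_wt i j a.
Proof.
apply/forallP/forallP => H m; have := H (pi m);
  by rewrite !ffunE !val_inord ?f_lt // !f_eps2 // piK.
Qed.

Lemma wcomp_conj (v : 'M[k]_8) a :
  wcomp (P *m v *m P) a = P *m wcomp v (wt_perm pi a) *m P.
Proof.
by apply/matrixP => i j; rewrite [LHS]mxE !(permmx_conj f_lt fK) mxE entry_wt_conj.
Qed.

Lemma weight_pattern_conj (S : {set wt}) (v : 'M[k]_8) :
  weight_pattern S v -> weight_pattern [set a | wt_perm pi a \in S] (P *m v *m P).
Proof.
case=> Hz Hnz; split=> a; first by rewrite inE wcomp_conj => /Hz ->; rewrite mulmx0 mul0mx.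
rewrite (lambda_preim S (wt_perm_invol piK) (wt_ge_perm piK)) inE => /Hnz.
apply: contra => /eqP; rewrite wcomp_conj => H0.
by rewrite -[wcomp v _]conjK H0 mulmx0 mul0mx.
Qed.

Lemma trivial_orbit_conj (v : 'M[k]_8) : trivial_orbit v -> trivial_orbit (P *m v *m P).
Proof.
move/trivial_orbitP => [F [u [w [g [HF Hu Hw Hg Hv]]]]]; apply/trivial_orbitP.
exists F, u, (P *m w), (P *m g *m P); split => //; first exact: W0_mul.
  exact: in_Gk_conj.
have PgPw : P *m g *m P *m (P *m w) = P *m (g *m w).
  by rewrite -!mulmxA (mulmxA P P) (permmx_invol k f_lt fK) mul1mx.
rewrite PgPw mulmxA -(mulmxA (P *m v)) (permmx_invol k f_lt fK) mulmx1.
by rewrite -mulmxA Hv mulmxA.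
Qed.

Lemma trivial_on_pattern_conj (S S' : {set wt}) :
  [set a | wt_perm pi a \in S] = S' -> trivial_on_pattern k S' -> trivial_on_pattern k S.
Proof.
move=> HS Htriv v hv hpat.
rewrite -[v]conjK.
apply: trivial_orbit_conj; apply: Htriv; first exact: in_V_conj.
by rewrite -HS; apply: weight_pattern_conj.
Qed.

End WeylReflection.

Definition sigma_wt_idx (m : 'I_4) : 'I_4 := inord (nth 0%N [:: 1; 0; 3; 2]%N m).
Definition tau_wt_idx (m : 'I_4) : 'I_4 := inord (nth 0%N [:: 2; 3; 0; 1]%N m).

Lemma sigma_wt_idxK : involutive sigma_wt_idx.
Proof.
by case=> [[|[|[|[|m]]]] Hm] //; apply: ord_inj; rewrite /sigma_wt_idx /= !inordK.
Qed.

Lemma tau_wt_idxK : involutive tau_wt_idx.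
Proof.
by case=> [[|[|[|[|m]]]] Hm] //; apply: ord_inj; rewrite /tau_wt_idx /= !inordK.
Qed.

Lemma sigma_idx_psi i : (i < 8)%N -> sigma_idx (psi_pair i) = psi_pair (sigma_idx i).
Proof. by do 8 (case: i => [|i] //). Qed.
Lemma tau_idx_psi i : (i < 8)%N -> tau_idx (psi_pair i) = psi_pair (tau_idx i).
Proof. by do 8 (case: i => [|i] //). Qed.

Lemma sigma_idx_s i : (i < 8)%N -> s_plus (sigma_idx i) = false (+) s_plus i.
Proof. by do 8 (case: i => [|i] //). Qed.
Lemma tau_idx_s i : (i < 8)%N -> s_plus (tau_idx i) = true (+) s_plus i.
Proof. by do 8 (case: i => [|i] //). Qed.

Lemma sigma_idx_eps2 i (m : 'I_4) : (i < 8)%N -> eps2 (sigma_idx i) m = eps2 i (sigma_wt_idx m).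
Proof.
by case: m => [[|[|[|[|m]]]] Hm] //; rewrite /sigma_wt_idx /= inordK //; do 8 (case: i => [|i] //).
Qed.
Lemma tau_idx_eps2 i (m : 'I_4) : (i < 8)%N -> eps2 (tau_idx i) m = eps2 i (tau_wt_idx m).
Proof.
by case: m => [[|[|[|[|m]]]] Hm] //; rewrite /tau_wt_idx /= inordK //; do 8 (case: i => [|i] //).
Qed.

Section WeylInstances.
Variable k : fieldType.

Lemma ent_permmx_conj f (A : 'M[k]_8) a b :
  (forall i, (i < 8)%N -> (f i < 8)%N) -> (forall i, (i < 8)%N -> f (f i) = i) ->
  (a < 8)%N -> (b < 8)%N -> ent (permmx k f *m A *m permmx k f) a b = ent A (f a) (f b).
Proof. by move=> f_lt fK Ha Hb; rewrite /ent (permmx_conj f_lt fK) !inordK. Qed.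

Lemma ent_sigma_conj (A : 'M[k]_8) a b : (a < 8)%N -> (b < 8)%N ->
  ent (sigma_mx k *m A *m sigma_mx k) a b = ent A (sigma_idx a) (sigma_idx b).
Proof. exact: ent_permmx_conj sigma_idx_lt sigma_idxK. Qed.

Lemma ent_tau_conj (A : 'M[k]_8) a b : (a < 8)%N -> (b < 8)%N ->
  ent (tau_mx k *m A *m tau_mx k) a b = ent A (tau_idx a) (tau_idx b).
Proof. exact: ent_permmx_conj tau_idx_lt tau_idxK. Qed.

Lemma sigma_det_blockP (g : 'M[k]_8) :
  \det (blockP (sigma_mx k *m g *m sigma_mx k)) = \det (blockP g).
Proof. by rewrite !det_mx4 /det4 !blockP_ent // /= !ent_sigma_conj //=; ring. Qed.

Lemma sigma_det_blockM (g : 'M[k]_8) :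
  \det (blockM (sigma_mx k *m g *m sigma_mx k)) = \det (blockM g).
Proof. by rewrite !det_mx4 /det4 !blockM_ent // /= !ent_sigma_conj //=; ring. Qed.

Lemma tau_det_blockP (g : 'M[k]_8) :
  \det (blockP (tau_mx k *m g *m tau_mx k)) = \det (blockM g).
Proof. by rewrite !det_mx4 /det4 !blockP_ent // !blockM_ent // /= !ent_tau_conj //=; ring. Qed.

Lemma tau_det_blockM (g : 'M[k]_8) :
  \det (blockM (tau_mx k *m g *m tau_mx k)) = \det (blockP g).
Proof. by rewrite !det_mx4 /det4 !blockM_ent // !blockP_ent // /= !ent_tau_conj //=; ring. Qed.

Lemma trivial_on_pattern_sigma (S S' : {set wt}) :
  [set a | wt_perm sigma_wt_idx a \in S] = S' ->
  trivial_on_pattern k S' -> trivial_on_pattern k S.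
Proof.
apply: (@trivial_on_pattern_conj k sigma_idx false sigma_wt_idx).
- exact: sigma_idx_lt.
- exact: sigma_idxK.
- exact: sigma_idx_psi.
- exact: sigma_idx_s.
- exact: sigma_wt_idxK.
- exact: sigma_idx_eps2.
- by rewrite -[permmx _ _]mulmx1; apply/W0_s/W0_1.
- exact: sigma_det_blockP.
- exact: sigma_det_blockM.
Qed.

Lemma trivial_on_pattern_tau (S S' : {set wt}) :
  [set a | wt_perm tau_wt_idx a \in S] = S' ->
  trivial_on_pattern k S' -> trivial_on_pattern k S.
Proof.
apply: (@trivial_on_pattern_conj k tau_idx true tau_wt_idx).
- exact: tau_idx_lt.
- exact: tau_idxK.
- exact: tau_idx_psi.
- exact: tau_idx_s.
- exact: tau_wt_idxK.
- exact: tau_idx_eps2.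
- by rewrite -[permmx _ _]mulmx1; apply/W0_t/W0_1.
- exact: tau_det_blockP.
- exact: tau_det_blockM.
Qed.
End WeylInstances.

(** * The four patterns *)

Lemma coord_wt_S1 q : (q < 4)%N -> coord_wt q \in S1.
Proof. by case: q => [|[|[|[|q]]]] //= _; rewrite /coord_wt /= !inE eqxx ?orbT. Qed.

Lemma coord_wt_lambda_S1 q : (4 <= q < 8)%N -> coord_wt q \in lambda S1.
Proof. by do 4 case: q => [|q] //; case: q => [|[|[|[|q]]]] //= _; lambda_mem. Qed.

Section PatternS1.
Variable k : fieldType.
Hypotheses (h2 : (2 : k) != 0) (h3 : (3 : k) != 0) (h7 : (7 : k) != 0).

Lemma trivial_on_pattern_S1 : trivial_on_pattern k S1.
Proof.
move=> v hv [Hz Hnz].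
have vcoord_eq0_lt4 q : (q < 4)%N -> vcoord v q = 0.
  move=> Hq; apply: vcoord_eq0; first exact: ltn_trans Hq _.
  by apply: Hz; apply: coord_wt_S1.
have vcoord_neq0 q : (4 <= q < 8)%N -> vcoord v q != 0.
  move=> Hq; apply: contra (Hnz _ (coord_wt_lambda_S1 Hq)) => /eqP H0.
  case/andP: Hq => _ Hq8.
  by rewrite (vmx_vcoord h2 hv) wcomp_vmx_eq0 // (ltn_trans Hq8).
have [g [u [Hg Hu Hvg]]] := vmx_conj_kappa h2 h3 h7 vcoord_eq0_lt4 vcoord_neq0.
apply/trivial_orbitP; exists (F0mx k), u, 1%:M, g; split => //.
- exact: F0mx_isF0.
- exact: W0_1.
- by rewrite mulmx1 {1}(vmx_vcoord h2 hv).
Qed.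
End PatternS1.

Lemma wt_perm_sigma_mkwt b0 b1 b2 b3 :
  wt_perm sigma_wt_idx (mkwt b0 b1 b2 b3) = mkwt b1 b0 b3 b2.
Proof.
by apply/ffunP => m; rewrite !ffunE; case: m => [[|[|[|[|m]]]] Hm] //=;
  rewrite /sigma_wt_idx /= inordK.
Qed.

Lemma wt_perm_tau_mkwt b0 b1 b2 b3 :
  wt_perm tau_wt_idx (mkwt b0 b1 b2 b3) = mkwt b2 b3 b0 b1.
Proof.
by apply/ffunP => m; rewrite !ffunE; case: m => [[|[|[|[|m]]]] Hm] //=;
  rewrite /tau_wt_idx /= inordK.
Qed.

Lemma preim_tau_S2 : [set a | wt_perm tau_wt_idx a \in S2] = S1.
Proof.
apply/setP => a; rewrite [a]wt_eta !inE wt_perm_tau_mkwt !mkwt_eq.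
by case: (a (ord4 0)); case: (a (ord4 1)); case: (a (ord4 2)); case: (a (ord4 3)).
Qed.

Lemma preim_sigma_S3 : [set a | wt_perm sigma_wt_idx a \in S3] = S1.
Proof.
apply/setP => a; rewrite [a]wt_eta !inE wt_perm_sigma_mkwt !mkwt_eq.
by case: (a (ord4 0)); case: (a (ord4 1)); case: (a (ord4 2)); case: (a (ord4 3)).
Qed.

Lemma preim_sigma_S4 : [set a | wt_perm sigma_wt_idx a \in S4] = S2.
Proof.
apply/setP => a; rewrite [a]wt_eta !inE wt_perm_sigma_mkwt !mkwt_eq.
by case: (a (ord4 0)); case: (a (ord4 1)); case: (a (ord4 2)); case: (a (ord4 3)).
Qed.

Lemma natr_neq0_lt_pchar (k : fieldType) p n :
  p \in [pchar k] -> (0 < n)%N -> (n < p)%N -> (n%:R : k) != 0.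
Proof. by move=> hchar n0 np; rewrite -(dvdn_pcharf hchar) gtnNdvd. Qed.

Unset Implicit Arguments.

Theorem lemma3p5 (p : nat) (k : fieldType)
  (hp : prime p) (hp23 : (23 <= p)%N) (hchar : p \in [pchar k])
  (v : 'M[k]_8) (hv : in_V v)
  (S : {set wt}) (hS : S \in [:: S1; S2; S3; S4])
  (hzero : forall a, a \in S -> wcomp v a = 0)
  (hnz : forall a, a \in lambda S -> wcomp v a != 0)
  (hD : Delta v != 0) :
  trivial_orbit v.
Proof.
have natr_neq0 n : (0 < n < 23)%N -> (n%:R : k) != 0.
  by case/andP => n0 n23; apply: natr_neq0_lt_pchar hchar n0 (leq_trans n23 hp23).
have S1T := trivial_on_pattern_S1 (natr_neq0 2%N erefl) (natr_neq0 3%N erefl)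
  (natr_neq0 7%N erefl).
have S2T := trivial_on_pattern_tau preim_tau_S2 S1T.
have S3T := trivial_on_pattern_sigma preim_sigma_S3 S1T.
have S4T := trivial_on_pattern_sigma preim_sigma_S4 S2T.
suff HS : trivial_on_pattern k S by exact: HS v hv (conj hzero hnz).
by move: hS; rewrite !inE => /or4P [] /eqP ->.
Qed.
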